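(* Let $m$ be a positive integer and $n=m(m+1)/2$, and write $\prod_{i=1}^m(1-X^i)=\sum_{i=0}^n c_iX^i$. The matrix $\mathsf R$ with rows indexed by positive integers $k$, columns indexed by non-empty subsets $S\subseteq[1,m]$, and $(k,S)$ entry $r(k,S)$, has rank $n$ over $\mathbb{Q}$. Moreover, for all $k>n$ and all non-empty $S\subseteq[1,m]$, $$r(k,S)=-\sum_{j=k-n}^{k-1}c_{k-j}\,r(j,S).$$
   Context: $r(k,S)$ is the number of partitions $\lambda$ of $k$ such that every part of $\lambda$ lies in $S$ and every element of $S$ occurs as a part of $\lambda$ (i.e. the set of distinct parts of $\lambda$ is exactly $S$). $[1,m]=\{1,\dots,m\}$. *)

From HB Require Import structures.
From mathcomp Require Import all_boot all_order all_algebra.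
Set Implicit Arguments. Unset Strict Implicit. Unset Printing Implicit Defensive.
Import Order.TTheory GRing.Theory Num.Theory.

(* A partition of k is represented, zero-padded, as a nonincreasing
   k-tuple of naturals <= k summing to k; its parts are its nonzero
   entries (a partition of k has at most k parts, each <= k). *)
Definition parts_of k (t : k.-tuple 'I_k.+1) : seq nat :=
  [seq x <- map val t | x != 0%N].

Definition is_partition_of k (t : k.-tuple 'I_k.+1) : bool :=
  sorted geq (map val t) && (sumn (map val t) == k).

Definition r (k : nat) (S : seq nat) : nat :=
  #|[set t : k.-tuple 'I_k.+1 | is_partition_of t &&
      (all (fun x => x \in S) (parts_of t) && all (fun s => s \in parts_of t) S)]|.

(* Nonempty subsets of [1,m], as subsets of {0,...,m} avoiding 0. *)
Definition nesub (m : nat) (S : {set 'I_m.+1}) : bool :=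
  (S != set0) && (S \subset [set i : 'I_m.+1 | 0 < val i]).

Definition NESub (m : nat) := {S : {set 'I_m.+1} | nesub S}.

Definition Snat (m : nat) (S : {set 'I_m.+1}) : seq nat := [seq val i | i in S].

(* The first N rows (k = 1..N) of the matrix R, columns enumerating NESub m. *)
Definition Rmat (m N : nat) : 'M[rat]_(N, #|{: NESub m}|) :=
  \matrix_(i < N, j < #|{: NESub m}|) ((r i.+1 (Snat (val (enum_val j))))%:R)%R.

Definition cpoly (m : nat) : {poly int} := \prod_(1 <= i < m.+1) (1 - 'X^i)%R.

From HB Require Import structures.
From mathcomp Require Import all_boot all_order all_algebra.
Import Order.TTheory GRing.Theory Num.Theory.

(* For a set S of positive integers with largest element s, a partition whose
   set of parts is S begins with s; deleting that part gives the recursion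
     r(k,S) = r(k-s,S) + r(k-s,S\{s})  if s <= k,   r(k,S) = 0  otherwise.
   Induction on S along this recursion yields two facts:
   - triangularity: r(k,S) = 0 for k < sum S, and r(sum S,S) = 1;
   - the generating function identity prod_(x in S) (1 - X^x) * sum_k r(k,S) X^k
     = X^(sum S), stated with truncated products of polynomials and sequences.
   If S is contained in [1,m], prod_(x in S) (1 - X^x) divides cpoly m, whose
   degree is n = m(m+1)/2; hence cpoly m kills the coefficients of index k > n of
   sum_k r(k,S) X^k, which is the recurrence.  So every row of R is a rational
   combination of its first n rows, and rank R <= n.  Conversely each t in [1,n]
   is the sum of a subset S_t of [1,m]; by triangularity the first n rows
   restricted to the columns S_1, ..., S_n form a unitriangular matrix, hence
   the first n rows are independent. *)

Set Implicit Arguments.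
Unset Strict Implicit.

Definition partition_list (k : nat) (p : seq nat) : bool :=
  [&& all (fun x => 0 < x) p, sorted geq p & sumn p == k].

Definition parts_exactly (S p : seq nat) : bool :=
  all (fun x => x \in S) p && all (fun s => s \in p) S.

Definition partitions (k : nat) : seq (seq nat) :=
  map (@parts_of k) (filter (@is_partition_of k) (enum {: k.-tuple 'I_k.+1})).

Lemma r_count k S : r k S = count (parts_exactly S) (partitions k).
Proof.
rewrite /r cardsE cardE /partitions count_map count_filter -size_filter.
rewrite /enum_mem !size_filter count_filter.
by apply: eq_count => t /=; rewrite !unfold_in /= andbT [RHS]andbC.
Qed.

Lemma geq_trans : transitive geq.
Proof. by move=> x y z /= h1 h2; apply: leq_trans h2 h1. Qed.

Lemma sorted_geq_split (s : seq nat) : sorted geq s ->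
  s = [seq x <- s | x != 0] ++ nseq (count_mem 0 s) 0.
Proof.
elim: s => [|x s IH] //= hs.
have hs' : sorted geq s := path_sorted hs.
case: (eqVneq x 0) hs => [->|hx] hs /=; last by rewrite add0n {1}(IH hs').
have s0 : [seq y <- s | y != 0] = [::].
  apply/eqP; rewrite -(negbK (_ == _)) -has_filter; apply/hasPn => y ys /=.
  move: hs; rewrite /= (path_sortedE geq_trans) => /andP[/allP/(_ y ys) y0 _].
  by rewrite negbK -leqn0.
by rewrite {1}(IH hs') s0.
Qed.

Lemma parts_of_inj k : {in @is_partition_of k &, injective (@parts_of k)}.
Proof.
move=> t1 t2; rewrite !unfold_in => /andP[s1 _] /andP[s2 _] e.
have zeros (t : k.-tuple 'I_k.+1) : count_mem 0 (map val t) = k - size (parts_of t).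
  have h : count (fun x => x != 0) (map val t) + count_mem 0 (map val t) = k.
    rewrite -[RHS](size_tuple t) -(size_map val t) -(count_predC (fun x => x != 0)).
    by congr (_ + _); apply: eq_count => x /=; rewrite negbK eq_sym.
  by rewrite /parts_of size_filter -[X in _ = X - _]h addKn.
apply: val_inj; apply: (inj_map val_inj).
by rewrite (sorted_geq_split s1) (sorted_geq_split s2) !zeros -/(parts_of t1) e.
Qed.

Lemma mem_leq_sumn (s : seq nat) x : x \in s -> x <= sumn s.
Proof. by rewrite sumnE => xs; rewrite (big_rem x xs) leq_addr. Qed.

Lemma size_leq_sumn (s : seq nat) : all (fun x => 0 < x) s -> size s <= sumn s.
Proof. by elim: s => [|y s IH] //= /andP[hy /IH h]; rewrite -add1n leq_add. Qed.

Lemma partition_list_parts k (t : k.-tuple 'I_k.+1) :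
  is_partition_of t -> partition_list k (parts_of t).
Proof.
rewrite /is_partition_of /partition_list /parts_of => /andP[hs /eqP hsum].
apply/and3P; split.
- by apply/allP => x; rewrite mem_filter lt0n => /andP[].
- exact: sorted_filter geq_trans _ _ hs.
- rewrite -[X in _ == X]hsum [in X in _ == X](sorted_geq_split hs).
  by rewrite sumn_cat sumn_nseq mul0n addn0.
Qed.

Lemma pad_partition k p : partition_list k p ->
  exists2 t : k.-tuple 'I_k.+1, is_partition_of t & parts_of t = p.
Proof.
case/and3P => hpos hsort /eqP hsum.
set s := p ++ nseq (k - size p) 0.
have size_s : size (map (@inord k) s) == k.
  by rewrite size_map size_cat size_nseq subnKC // -hsum size_leq_sumn.
have val_s : map val (Tuple size_s) = s.
  rewrite /= -map_comp -[RHS]map_id; apply/eq_in_map => x /=.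
  rewrite mem_cat mem_nseq => /orP[/mem_leq_sumn|/andP[_ /eqP->]]; last exact: inordK.
  by rewrite hsum -ltnS => /inordK.
exists (Tuple size_s).
  rewrite /is_partition_of val_s /s sumn_cat sumn_nseq mul0n addn0 hsum eqxx andbT.
  have path0 y j : path geq y (nseq j 0) by elim: j y => [|j IH] y //=; rewrite IH andbT.
  case: (p) hsort => [|x p'] hsort; first by case: (k - 0) => //= j.
  by rewrite /= cat_path -/(sorted geq (x :: p')) hsort path0.
rewrite /parts_of val_s filter_cat -[RHS]cats0; congr (_ ++ _).
  by apply/all_filterP; apply: sub_all hpos => x; rewrite lt0n.
apply/eqP; rewrite -(negbK (_ == _)) -has_filter; apply/hasPn => x.
by rewrite mem_nseq => /andP[_ /eqP->].
Qed.

Lemma mem_partitions k p : (p \in partitions k) = partition_list k p.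
Proof.
apply/mapP/idP => [[t]|/pad_partition[t ht <-]].
  by rewrite mem_filter => /andP[ht _] ->; exact: partition_list_parts.
by exists t; rewrite // mem_filter ht mem_enum.
Qed.

Lemma uniq_partitions k : uniq (partitions k).
Proof.
rewrite map_inj_in_uniq; first by apply: filter_uniq; apply: enum_uniq.
by move=> t1 t2; rewrite !mem_filter => /andP[h1 _] /andP[h2 _]; exact: parts_of_inj.
Qed.

Lemma r_nil k : r k [::] = (k == 0).
Proof.
rewrite r_count (eq_count (a2 := pred1 [::])); last first.
  by case=> [|x p] //=; rewrite /parts_exactly /= andbT.
rewrite (count_uniq_mem _ (uniq_partitions k)) mem_partitions /partition_list /= eq_sym.
by case: (k == 0).
Qed.

Section RemoveLargestPart.

Variables (S : seq nat) (s : nat).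
Hypothesis s_in_S : s \in S.
Hypothesis S_bounds : forall x, x \in S -> 0 < x <= s.
Let S' := [seq x <- S | x != s].

(* A partition with parts in S is nonincreasing, so it starts with s. *)
Lemma head_parts_exactly x p :
  parts_exactly S (x :: p) -> sorted geq (x :: p) -> x = s.
Proof.
case/andP => /andP[xS _] /allP/(_ s s_in_S) sp /= hpath.
apply/eqP; rewrite eqn_leq; case/andP: (S_bounds xS) => _ -> /=.
move: sp; rewrite inE => /orP[/eqP->//|sp].
by move: hpath; rewrite (path_sortedE geq_trans) => /andP[/allP/(_ s sp)].
Qed.

Lemma parts_exactly_cons p :
  parts_exactly S (s :: p) = parts_exactly S p || parts_exactly S' p.
Proof.
rewrite /parts_exactly /= s_in_S /=.
have memS' y : (y \in S') = (y != s) && (y \in S) by rewrite mem_filter.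
apply/andP/orP => [[pS /allP Sp]|].
  case: (boolP (s \in p)) => sp.
    by left; rewrite pS; apply/allP => y /Sp; rewrite inE => /orP[/eqP->|].
  right; apply/andP; split; apply/allP => y.
    by move=> yp; rewrite memS' (allP pS y yp) andbT; apply: contraNneq sp => <-.
  by rewrite memS' => /andP[ys /Sp]; rewrite inE (negbTE ys).
case=> /andP[/allP pS /allP Sp]; split.
- by apply/allP.
- by apply/allP => y yS; rewrite inE Sp ?orbT.
- by apply/allP => y /pS; rewrite memS' => /andP[].
- apply/allP => y yS; rewrite inE; case: eqP => //= /eqP ys.
  by apply: Sp; rewrite memS' ys.
Qed.

Lemma partition_list_cons k p :
  all (fun x => x \in S) p ->
  partition_list k (s :: p) = (s <= k) && partition_list (k - s) p.
Proof.
move=> pS; rewrite /partition_list /= (path_sortedE geq_trans).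
have -> : all (geq s) p by apply: sub_all pS => x /S_bounds /andP[].
rewrite (andP (S_bounds s_in_S)).1 /=.
have [sk|ks] := leqP s k; first by rewrite -(eqn_add2l s (sumn p)) subnKC.
have -> : (s + sumn p == k) = false.
  by apply: contraTF ks => /eqP <-; rewrite -leqNgt leq_addr.
by rewrite !andbF.
Qed.

Lemma r_remove_largest k :
  r k S = if s <= k then r (k - s) S + r (k - s) S' else 0.
Proof.
set F := [seq p <- partitions (k - s) | parts_exactly S p || parts_exactly S' p].
have disjointS p : parts_exactly S p -> parts_exactly S' p = false.
  case/andP => _ /allP/(_ s s_in_S) sp; apply/negbTE.
  by apply/negP => /andP[/allP/(_ s sp)]; rewrite mem_filter eqxx.
have memF : forall q, parts_exactly S q && partition_list k q =
                      (q \in if s <= k then map (cons s) F else [::]).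
  case=> [|x p].
    have -> : parts_exactly S [::] = false.
      by rewrite /parts_exactly /=; apply/negbTE/allPn; exists s.
    by case: ifP => // _; apply/esym/negbTE/mapP => -[].
  have [->|xs] := eqVneq x s; last first.
    apply/andP/idP => [[pe /and3P[_ srt _]]|].
      by rewrite (head_parts_exactly pe srt) eqxx in xs.
    by case: ifP => // _ /mapP[q _ [/eqP]]; rewrite (negbTE xs).
  have mem_cons q : (s :: p \in map (cons s) q) = (p \in q).
    by rewrite mem_map //; move=> a b [].
  case: (boolP (parts_exactly S (s :: p))) => pe /=.
    rewrite partition_list_cons; last by case/andP: pe => /andP[].
    by case: ifP => // sk; rewrite mem_cons mem_filter mem_partitions -parts_exactly_cons pe.
  by case: ifP => // _; rewrite mem_cons mem_filter -parts_exactly_cons (negbTE pe).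
have hperm : perm_eq [seq q <- partitions k | parts_exactly S q]
                     (if s <= k then map (cons s) F else [::]).
  apply: uniq_perm; first exact: filter_uniq (uniq_partitions k).
    by case: ifP => // _; rewrite map_inj_uniq ?filter_uniq ?uniq_partitions // => a b [].
  by move=> q; rewrite mem_filter mem_partitions -memF.
rewrite r_count -size_filter (perm_size hperm); case: ifP => // _.
rewrite size_map size_filter !r_count -count_predUI.
rewrite (@eq_count _ (predI _ _) pred0) ?count_pred0 ?addn0 // => p /=.
by apply/negbTE/andP => -[/disjointS ->].
Qed.

End RemoveLargestPart.

Lemma exists_largest (S : seq nat) :
  S != [::] -> exists2 s, s \in S & forall x, x \in S -> x <= s.
Proof.
elim: S => [|y S IH] // _; have [->|/IH[s sS hs]] := eqVneq S [::].
  by exists y; rewrite ?inE // => x; rewrite inE => /eqP->.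
have [sy|ys] := leqP s y.
  exists y; first by rewrite inE eqxx.
  by move=> x; rewrite inE => /orP[/eqP->//|/hs/leq_trans]; apply.
exists s; first by rewrite inE sS orbT.
by move=> x; rewrite inE => /orP[/eqP->|/hs]; first exact: ltnW.
Qed.

Lemma largest_part_ind (P : seq nat -> Prop) :
  P [::] ->
  (forall S s, uniq S -> s \in S -> (forall x, x \in S -> 0 < x <= s) ->
     P [seq x <- S | x != s] -> P S) ->
  forall S, uniq S -> all (fun x => 0 < x) S -> P S.
Proof.
move=> P0 Pstep S; elim: {S}(size S) {-2}S (leqnn (size S)) => [|n IH] S.
  by rewrite leqn0 size_eq0 => /eqP->.
move=> hsz uS posS; have [->//|S0] := eqVneq S [::].
have [s sS hs] := exists_largest S0.
apply: (Pstep S s uS sS) => [x xS|]; first by rewrite (allP posS x xS) hs.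
apply: IH; rewrite ?filter_uniq //.
  by rewrite -(rem_filter s uS) size_rem // -subn1 leq_subLR add1n.
by apply/allP => x; rewrite mem_filter => /andP[_ /(allP posS)].
Qed.

Lemma perm_remove (S : seq nat) s :
  uniq S -> s \in S -> perm_eq S (s :: [seq x <- S | x != s]).
Proof. by move=> uS sS; rewrite -(rem_filter s uS); exact: perm_to_rem. Qed.

Lemma r_triangular (S : seq nat) : uniq S -> all (fun x => 0 < x) S ->
  (forall k, k < sumn S -> r k S = 0) /\ r (sumn S) S = 1.
Proof.
move: S; apply: largest_part_ind => [|S s uS sS Sbd [IH0 IH1]]; first by rewrite r_nil.
set S' := [seq x <- S | x != s] in IH0 IH1.
have sumS : sumn S = s + sumn S' by rewrite (perm_sumn (perm_remove uS sS)).
have s0 : 0 < s by case/andP: (Sbd s sS).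
have below k : k < sumn S -> r k S = 0.
  elim/ltn_ind: k => k IHk hk; rewrite (r_remove_largest sS Sbd).
  case: leqP => // sk; rewrite IHk ?IH0 //.
  - by rewrite -(ltn_add2l s) subnKC // -sumS.
  - by rewrite ltn_subrL s0 (leq_trans s0 sk).
  - exact: leq_ltn_trans (leq_subr s k) hk.
split=> //; rewrite (r_remove_largest sS Sbd) sumS leq_addr addKn below ?IH1 //.
by rewrite sumS -[X in X < _]add0n ltn_add2r.
Qed.

Local Open Scope ring_scope.

Section Convolution.

Variable R : nzRingType.
Implicit Types (p q : {poly R}) (a : nat -> R).

Definition trunc a k : {poly R} := \poly_(i < k.+1) a i.

(* conv p a k is the k-th coefficient of the formal power series p * (sum_i a_i X^i). *)
Definition conv p a k : R := (p * trunc a k)`_k.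

Lemma coefM_agree p q1 q2 k :
  (forall i, (i <= k)%N -> q1`_i = q2`_i) -> (p * q1)`_k = (p * q2)`_k.
Proof. by move=> h; rewrite !coefM; apply: eq_bigr => i _; rewrite h // leq_subr. Qed.

Lemma conv_ext p a b k :
  (forall i, (i <= k)%N -> a i = b i) -> conv p a k = conv p b k.
Proof. by move=> h; apply: coefM_agree => i hi; rewrite !coef_poly ltnS hi h. Qed.

Lemma conv_mul p q a k : conv (p * q) a k = conv p (conv q a) k.
Proof.
rewrite /conv -mulrA; apply: coefM_agree => i hi.
rewrite [in RHS]coef_poly ltnS hi; apply: coefM_agree => j hj.
by rewrite !coef_poly !ltnS hj (leq_trans hj hi).
Qed.

Lemma conv_coef p q k : conv p (fun i => q`_i) k = (p * q)`_k.
Proof. by apply: coefM_agree => i hi; rewrite coef_poly ltnS hi. Qed.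

Lemma conv_sub p q a k : conv (p - q) a k = conv p a k - conv q a k.
Proof. by rewrite /conv mulrBl coefB. Qed.

Lemma conv1 a k : conv 1 a k = a k.
Proof. by rewrite /conv mul1r coef_poly ltnSn. Qed.

Lemma convXn s a k : conv 'X^s a k = if (s <= k)%N then a (k - s)%N else 0.
Proof.
rewrite /conv coefXnM ltnNge; case: (s <= k)%N => //=.
by rewrite coef_poly ltnS leq_subr.
Qed.

Lemma conv_window p a n k : (size p <= n.+1)%N -> (n <= k)%N ->
  conv p a k = p`_0 * a k + \sum_(k - n <= j < k) p`_(k - j) * a j.
Proof.
move=> szp nk; rewrite /conv coefM big_ord_recl subn0 coef_poly ltnSn; congr (_ + _).
rewrite -(big_mkord xpredT (fun i => p`_i.+1 * (trunc a k)`_(k - i.+1))) big_nat_rev /=.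
rewrite (@big_cat_nat _ _ _ (k - n)) ?leq_subr //= big_nat_cond big1 ?add0r.
  apply: eq_big_nat => j /andP[_ jk].
  by rewrite add0n -subSn // subSS subKn ?(ltnW jk) // coef_poly ltnS (ltnW jk).
move=> j /andP[/andP[_ jkn] _]; rewrite nth_default ?mul0r //.
have jk : (j < k)%N := leq_trans jkn (leq_subr n k).
by rewrite add0n -subSn // subSS (leq_trans szp) // ltn_subRL addnC -ltn_subRL.
Qed.

End Convolution.

Definition rseq (S : seq nat) (k : nat) : int := (r k S)%:Z.

Lemma r_generating (S : seq nat) : uniq S -> all (fun x => 0 < x)%N S ->
  forall k, conv (\prod_(x <- S) (1 - 'X^x)) (rseq S) k = ('X^(sumn S))`_k.
Proof.
move: S; apply: largest_part_ind => [|S s uS sS Sbd IH] k.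
  by rewrite big_nil conv1 /rseq r_nil coefXn; case: (k == 0)%N.
set S' := [seq x <- S | x != s] in IH.
have peS := perm_remove uS sS.
have remove i : conv (1 - 'X^s) (rseq S) i = conv 'X^s (rseq S') i.
  rewrite conv_sub conv1 !convXn /rseq (r_remove_largest sS Sbd).
  by case: (s <= i)%N; rewrite ?subr0 // PoszD addrAC subrr add0r.
rewrite (perm_big _ peS) big_cons /= mulrC conv_mul (conv_ext _ (fun i _ => remove i)).
rewrite -conv_mul mulrC conv_mul (conv_ext _ (fun i _ => IH i)) conv_coef -exprD.
by rewrite (perm_sumn peS).
Qed.

(* n = 1 + 2 + ... + m, the degree of cpoly m. *)
Definition tri_num (m : nat) : nat := (\sum_(1 <= i < m.+1) i)%N.

Lemma tri_numE m : tri_num m = ((m * m.+1) %/ 2)%N.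
Proof.
rewrite /tri_num divn2 mulnC -[X in (_ * X)%N]/(m.+1.-1).
by rewrite -bin2 -bin2_sum [RHS]big_ltn.
Qed.

Lemma size_prod_1_sub_Xn (R : nzRingType) (s : seq nat) (P : pred nat) :
  (size ((\prod_(i <- s | P i) (1 - 'X^i))%R : {poly R}) <= (\sum_(i <- s | P i) i).+1)%N.
Proof.
elim/big_rec2: _ => [|i d q _ hq]; first by rewrite size_poly1.
have h1X : (size ((1 - 'X^i)%R : {poly R}) <= i.+1)%N.
  by rewrite (leq_trans (size_polyD _ _)) // size_polyN size_poly1 size_polyXn geq_max ltnS /=.
apply: leq_trans (size_polyMleq _ _) _.
by rewrite -subn1 leq_subLR add1n -addnS -addSn leq_add.
Qed.

Lemma cpoly_coef0 m : (cpoly m)`_0 = 1.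
Proof.
rewrite -horner_coef0 /cpoly horner_prod big_nat big1 // => i /andP[i0 _].
by rewrite !hornerE expr0n; case: i i0.
Qed.

Lemma cpoly_annihilates m (S : seq nat) k : uniq S -> all (fun x => 0 < x <= m)%N S ->
  (tri_num m < k)%N -> conv (cpoly m) (rseq S) k = 0.
Proof.
move=> uS Sm hk.
have posS : all (fun x => 0 < x)%N S by apply: sub_all Sm => x /andP[].
have perm_S : perm_eq [seq i <- index_iota 1 m.+1 | i \in S] S.
  apply: uniq_perm; rewrite ?filter_uniq ?iota_uniq // => x.
  rewrite mem_filter mem_index_iota ltnS; case xS: (x \in S) => //.
  exact: (allP Sm x xS).
set B := \prod_(1 <= i < m.+1 | i \notin S) (1 - 'X^i) : {poly int}.
have cpolyE : cpoly m = B * \prod_(x <- S) (1 - 'X^x).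
  by rewrite /cpoly (bigID (mem S)) mulrC -big_filter (perm_big _ perm_S).
have degE : (\sum_(1 <= i < m.+1 | i \notin S) i + sumn S)%N = tri_num m.
  rewrite /tri_num [RHS](bigID (mem S)) /= [in RHS]addnC; congr (_ + _)%N.
  by rewrite sumnE -(perm_big _ perm_S) big_filter.
rewrite cpolyE conv_mul (conv_ext _ (fun i _ => r_generating uS posS i)) conv_coef.
rewrite nth_default // (leq_trans (size_polyMleq _ _)) // size_polyXn addnS /=.
by rewrite (leq_trans _ hk) // -degE -addSn leq_add2r size_prod_1_sub_Xn.
Qed.

Lemma r_recurrence m (S : seq nat) k : uniq S -> all (fun x => 0 < x <= m)%N S ->
  (tri_num m < k)%N ->
  (r k S)%:Z = - \sum_(k - tri_num m <= j < k) (cpoly m)`_(k - j) * (r j S)%:Z.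
Proof.
move=> uS Sm hk; apply/eqP; rewrite -addr_eq0; apply/eqP.
have szQ : (size (cpoly m) <= (tri_num m).+1)%N by exact: size_prod_1_sub_Xn.
have := cpoly_annihilates uS Sm hk.
by rewrite (conv_window _ szQ (ltnW hk)) cpoly_coef0 mul1r.
Qed.

Lemma row_free_triangular (F : fieldType) n c (A : 'M[F]_(n, c)) (col : 'I_n -> 'I_c) :
  (forall i j : 'I_n, (i < j)%N -> A i (col j) = 0) -> (forall i, A i (col i) != 0) ->
  row_free A.
Proof.
move=> above diag; set B := mxsub id col A.
have BE : B = A *m mxsub id col 1%:M by rewrite mulmx_colsub mulmx1.
have : B \in unitmx.
  rewrite unitmxE det_trig; last by apply/is_trig_mxP => i j ij; rewrite mxE above.
  by rewrite unitfE; apply/prodf_neq0 => i _; rewrite mxE.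
rewrite -row_free_unit => /row_freeP[D BD]; apply/row_freeP.
by exists (mxsub id col 1%:M *m D); rewrite mulmxA -BE.
Qed.

Lemma subset_sum m t : (0 < t <= tri_num m)%N ->
  exists S : seq nat, [/\ uniq S, all (fun x => 0 < x <= m)%N S & sumn S = t].
Proof.
elim: m t => [|m IH] t.
  by rewrite /tri_num big_geq // leqn0 => /andP[/lt0n_neq0/negbTE->].
case/andP => t0 htm; have [tm|mt] := leqP t m.+1.
  by exists [:: t]; rewrite /= t0 tm addn0.
have [|S [uS Sm sumS]] := IH (t - m.+1)%N.
  by rewrite subn_gt0 mt leq_subLR addnC -big_nat_recr.
exists (m.+1 :: S); split => /=.
- by rewrite uS andbT; apply/negP => /(allP Sm); rewrite ltnn andbF.
- by rewrite ltnSn; apply: sub_all Sm => x /andP[-> /leqW].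
- by rewrite sumS subnKC // ltnW.
Qed.

Lemma Snat_uniq m (S : {set 'I_m.+1}) : uniq (Snat S).
Proof. by rewrite map_inj_uniq ?enum_uniq //; exact: val_inj. Qed.

Lemma Snat_bounds m (S : {set 'I_m.+1}) : nesub S -> all (fun x => 0 < x <= m)%N (Snat S).
Proof.
case/andP => _ /subsetP hS; apply/allP => x /mapP[i]; rewrite mem_enum => iS ->.
by move: (hS i iS); rewrite inE => ->; rewrite -ltnS ltn_ord.
Qed.

Lemma exists_column_sum m (t : 'I_(tri_num m)) :
  exists A : NESub m, sumn (Snat (val A)) == t.+1.
Proof.
have [|S [uS Sm sumS]] := @subset_sum m t.+1; first by rewrite ltn_ord.
have [x0 x0S] : exists x, x \in S by case: (S) sumS => [|x ?] //; exists x; rewrite inE eqxx.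
set A := [set x : 'I_m.+1 | val x \in S].
have valK x : x \in S -> val (inord x : 'I_m.+1) = x.
  by move=> /(allP Sm)/andP[_ xm]; apply: inordK; rewrite ltnS.
have permA : perm_eq (Snat A) S.
  apply: uniq_perm; rewrite ?Snat_uniq // => x; apply/mapP/idP => [[y]|xS].
    by rewrite mem_enum inE => yS ->.
  by exists (inord x); rewrite ?mem_enum ?inE valK.
have nesubA : nesub A.
  apply/andP; split; last by apply/subsetP => x; rewrite !inE => /(allP Sm)/andP[].
  by apply/set0Pn; exists (inord x0); rewrite inE valK.
by exists (exist _ A nesubA); rewrite (perm_sumn permA) sumS.
Qed.

Definition Rrow m k : 'rV[rat]_#|{: NESub m}| :=
  \row_j (r k (Snat (val (enum_val j))))%:R.

Lemma row_Rmat m N (i : 'I_N) : row i (Rmat m N) = Rrow m i.+1.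
Proof. by apply/rowP => j; rewrite !mxE. Qed.

Lemma Rrow_recurrence m k : (tri_num m < k)%N ->
  Rrow m k = \sum_(k - tri_num m <= j < k) ((- (cpoly m)`_(k - j))%:~R : rat) *: Rrow m j.
Proof.
move=> hk; apply/rowP => j; rewrite summxE mxE pmulrn.
have hS := valP (enum_val j).
rewrite (r_recurrence (Snat_uniq _) (Snat_bounds hS) hk) rmorphN rmorph_sum -sumrN.
by apply: eq_bigr => l _; rewrite !mxE rmorphM /= rmorphN mulNr pmulrn.
Qed.

Lemma Rrow_sub m k : (0 < k)%N -> (Rrow m k <= Rmat m (tri_num m))%MS.
Proof.
elim/ltn_ind: k => k IH k0; have [kn|nk] := leqP k (tri_num m).
  have kn' : (k.-1 < tri_num m)%N by rewrite prednK.
  by have := row_sub (Ordinal kn') (Rmat m (tri_num m)); rewrite row_Rmat /= prednK.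
rewrite (Rrow_recurrence nk) big_nat; apply: summx_sub => j /andP[lo hi].
by apply/scalemx_sub/IH; rewrite // (leq_trans _ lo) // subn_gt0.
Qed.

Lemma rank_Rmat_le m N : (\rank (Rmat m N) <= tri_num m)%N.
Proof.
apply: leq_trans (rank_leq_row (Rmat m (tri_num m))); apply: mxrankS.
by apply/row_subP => i; rewrite row_Rmat Rrow_sub.
Qed.

(* The first n rows of R are independent: they are triangular on suitable columns. *)
Lemma Rmat_row_free m : row_free (Rmat m (tri_num m)).
Proof.
pose S (t : 'I_(tri_num m)) := xchoose (exists_column_sum t).
have S_triangular (t : 'I_(tri_num m)) :
  (forall k, (k < t.+1)%N -> r k (Snat (val (S t))) = 0) /\ r t.+1 (Snat (val (S t))) = 1.
  have /eqP <- := xchooseP (exists_column_sum t).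
  apply: r_triangular; first exact: Snat_uniq.
  by apply: sub_all (Snat_bounds (valP (S t))) => x /andP[].
apply: (@row_free_triangular _ _ _ _ (fun t => enum_rank (S t))) => [i t it|t].
  by rewrite mxE enum_rankK (S_triangular t).1.
by rewrite mxE enum_rankK (S_triangular t).2 oner_neq0.
Qed.

Local Close Scope ring_scope.

Theorem corollaryA (m : nat) (hm : (0 < m)%N) :
  let n := (m * m.+1) %/ 2 in
  ((forall N : nat, (\rank (Rmat m N) <= n)%N) /\
   (exists N : nat, \rank (Rmat m N) = n)) /\
  (forall (k : nat) (S : {set 'I_m.+1}), (n < k)%N -> nesub S ->
     ((r k (Snat S))%:Z =
      - \sum_(k - n <= j < k) (cpoly m)`_(k - j) * (r j (Snat S))%:Z)%R).
Proof.
rewrite /= -tri_numE; split; first split.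
- exact: rank_Rmat_le.
- by exists (tri_num m); apply/eqP; exact: Rmat_row_free.
- by move=> k S hk hS; exact: r_recurrence (Snat_uniq S) (Snat_bounds hS) hk.
Qed.
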